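(* Let $G$ be a subgroup of $\mathrm{GL}(d,\mathbb{R})$ and let $f\in\mathbb{R}[x_1,\dots,x_d]$ be a nonzero ordinary polynomial of total degree $n$. Then $R_G(f)$ is finite-dimensional and $$\sqrt[d]{\dim R_G(f)}-1\le n\le\dim R_G(f)-1.$$ Moreover, if $\dim R_G(f)=\binom{n+d}{d}$, then $n\le\sqrt[d]{d!\,\dim R_G(f)}-1$.
   Context: For $g\in C(\mathbb{R}^d)$, $h\in\mathbb{R}^d$, $P\in\mathrm{GL}(d,\mathbb{R})$: $\tau_hg(x)=g(x+h)$ and $O_Pg(x)=g(Px)$. $R_G(f)$ denotes the smallest vector subspace of $C(\mathbb{R}^d)$ containing $f$ and invariant under all $\tau_h$ ($h\in\mathbb{R}^d$) and all $O_P$ ($P\in G$). *)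

From HB Require Import structures.
From mathcomp Require Import all_boot all_order all_algebra.
From mathcomp Require Import all_classical all_reals all_analysis.
From mathcomp Require mpoly.
Import (canonicals, coercions, hints) mpoly.
Set Implicit Arguments. Unset Strict Implicit. Unset Printing Implicit Defensive.
Import Order.TTheory GRing.Theory Num.Theory.
Import numFieldTopology.Exports numFieldNormedType.Exports.
Local Open Scope classical_set_scope.
Local Open Scope ring_scope.

(* Points of R^d are column vectors 'cV[R]_d, so that P x is P *m x. *)

Definition is_GL_subgroup (R : realType) (d : nat) (G : set 'M[R]_d) : Prop :=
  [/\ G 1%:M,
      (forall P, G P -> P \in unitmx),
      (forall P Q, G P -> G Q -> G (P *m Q)) &
      (forall P, G P -> G (invmx P))].

Definition tau (R : realType) (d : nat) (h : 'cV[R]_d) (g : 'cV[R]_d -> R) :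
  'cV[R]_d -> R := fun x => g (x + h).

Definition Op (R : realType) (d : nat) (P : 'M[R]_d) (g : 'cV[R]_d -> R) :
  'cV[R]_d -> R := fun x => g (P *m x).

Definition is_subspace_C (R : realType) (d : nat) (S : set ('cV[R]_d -> R)) :=
  [/\ (forall g, S g -> continuous g),
      S (fun _ => 0),
      (forall g1 g2, S g1 -> S g2 -> S (fun x => g1 x + g2 x)) &
      (forall (a : R) g, S g -> S (fun x => a * g x))].

(* R_G(f): the smallest vector subspace of C(R^d) containing f and invariant
   under all tau_h and all O_P (P in G): the intersection of all such. *)
Definition RG (R : realType) (d : nat) (G : set 'M[R]_d) (f : 'cV[R]_d -> R) :
  set ('cV[R]_d -> R) :=
  [set g | forall S : set ('cV[R]_d -> R),
      is_subspace_C S -> S f ->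
      (forall h g', S g' -> S (tau h g')) ->
      (forall P g', G P -> S g' -> S (Op P g')) ->
      S g].

Definition has_dim (R : realType) (T : Type) (S : set (T -> R)) (D : nat) :=
  exists b : 'I_D -> (T -> R),
    [/\ (forall i, S (b i)),
        (forall c : 'I_D -> R, (forall x, \sum_(i < D) c i * b i x = 0) ->
            forall i, c i = 0) &
        (forall g, S g -> exists c : 'I_D -> R,
            forall x, g x = \sum_(i < D) c i * b i x)].

Definition polyfun (R : realType) (d : nat) (p : mpoly.mpoly d R) :
  'cV[R]_d -> R := fun x => mpoly.meval (fun i => x i ord0) p.

(* R_G(f) lies in the space of polynomial functions of degree at most n, a
   subspace of C(R^d) stable under translations and linear substitutions and
   spanned by the (n+1)^d monomials all of whose exponents are at most n; hence
   dim R_G(f) <= (n+1)^d.  Conversely, pick v where the top-degree part of f does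
   not vanish: then s |-> f(s v) has degree exactly n, so the iterated forward
   differences of f in direction v, which lie in R_G(f), restrict to the line
   R v as polynomials of degrees n, n-1, ..., 0 and are independent.  The last
   claim is (n+1)^d <= (n+d)(n+d-1)...(n+1) = d! C(n+d, d). *)

From HB Require Import structures.
From mathcomp Require Import all_boot all_order all_algebra.
From mathcomp Require Import all_classical all_reals all_analysis.
From mathcomp Require Import zify.
From mathcomp Require mpoly.
Import (canonicals, coercions, hints) mpoly.
Import Order.TTheory GRing.Theory Num.Theory.
Import numFieldTopology.Exports numFieldNormedType.Exports.
Set Implicit Arguments.
Unset Strict Implicit.
Unset Printing Implicit Defensive.
Local Open Scope ring_scope.

Local Notation msize p := (mpoly.msize p).
Local Notation msupp := mpoly.msupp.
Local Notation mdeg := mpoly.mdeg.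
Local Notation meval := mpoly.meval.
Local Notation mcoeff := mpoly.mcoeff.

Section PowRInv.
Variable R : realType.
Implicit Types a b : R.

Lemma exprn_powR_inv b d : (0 < d)%N -> 0 <= b -> (b ^+ d) `^ (d%:R)^-1 = b.
Proof.
move=> d_gt0 b_ge0; rewrite -powR_mulrn // -powRrM mulfV ?powRr1 //.
by rewrite pnatr_eq0 -lt0n.
Qed.

Lemma powR_inv_le a b d : (0 < d)%N -> 0 <= a -> 0 <= b ->
  a <= b ^+ d -> a `^ (d%:R)^-1 <= b.
Proof.
move=> d_gt0 a_ge0 b_ge0 le_ab; rewrite -[leRHS](exprn_powR_inv d_gt0 b_ge0).
by apply: ge0_ler_powR; rewrite ?nnegrE ?exprn_ge0.
Qed.

Lemma le_powR_inv a b d : (0 < d)%N -> 0 <= b ->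
  b ^+ d <= a -> b <= a `^ (d%:R)^-1.
Proof.
move=> d_gt0 b_ge0 le_ba; rewrite -[leLHS](exprn_powR_inv d_gt0 b_ge0).
apply: ge0_ler_powR; rewrite ?nnegrE ?exprn_ge0 //.
exact: le_trans (exprn_ge0 _ b_ge0) le_ba.
Qed.

End PowRInv.

Lemma expn_le_ffact n d : (n.+1 ^ d <= (n + d) ^_ d)%N.
Proof.
elim: d => [|d IHd]; first by rewrite expn0 ffactn0.
by rewrite addnS ffactSS expnS leq_mul // ltnS leq_addr.
Qed.

Lemma expn_le_fact_bin n d : (n.+1 ^ d <= d`! * 'C(n + d, d))%N.
Proof. by rewrite mulnC bin_ffact expn_le_ffact. Qed.

Lemma widen_ord_max n (j : 'I_n) : widen_ord (leqnSn n) j = lift ord_max j.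
Proof. by apply: ord_inj; rewrite lift_max. Qed.

Section FunctionFamilies.
Variables (R : fieldType) (T : Type).

Definition free_fun k (b : 'I_k -> T -> R) :=
  forall c : 'I_k -> R, (forall x, \sum_(i < k) c i * b i x = 0) ->
    forall i, c i = 0.

Definition in_span N (e : 'I_N -> T -> R) (g : T -> R) :=
  exists a : 'I_N -> R, forall x, g x = \sum_(j < N) a j * e j x.

Lemma free_fun_leq_span N k (e : 'I_N -> T -> R) (b : 'I_k -> T -> R) :
  (forall i, in_span e (b i)) -> free_fun b -> (k <= N)%N.
Proof.
(* A row dependence of the coordinate matrix of the b i in the e j is a
   dependence among the b i. *)
move=> /boolp.choice[A bA] free_b; rewrite leqNgt; apply/negP => ltNk.
pose M : 'M[R]_(k, N) := \matrix_(i, j) A i j.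
have [i kerMi] : exists i, row i (kermx M) != 0.
  apply: boolp.contrapT => /boolp.forallNP kerM0.
  suff : row_free M by rewrite /row_free => /eqP rkM; have := rank_leq_col M; lia.
  rewrite -kermx_eq0; apply/eqP/row_matrixP => i; rewrite row0.
  by apply/eqP/negPn/negP => /kerM0.
pose c := row i (kermx M).
have cM0 : c *m M = 0 by rewrite /c -row_mul mulmx_ker row0.
suff c0 : forall l, c ord0 l = 0.
  by move/negP: kerMi; apply; apply/eqP/rowP => l; rewrite [RHS]mxE; exact: c0.
apply: free_b => x.
under eq_bigr => l _ do rewrite bA big_distrr /=.
rewrite exchange_big big1 //= => j _.
under eq_bigr do rewrite mulrA.
rewrite -big_distrl /=.
have -> : \sum_(l < k) c ord0 l * A l j = (c *m M) ord0 j.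
  by rewrite !mxE; apply: eq_bigr => l _; rewrite !mxE.
by rewrite cM0 mxE mul0r.
Qed.

Lemma maximal_free_spans (S : set (T -> R)) D (b : 'I_D -> T -> R) :
  (forall i, S (b i)) -> free_fun b ->
  (forall b' : 'I_D.+1 -> T -> R, (forall i, S (b' i)) -> ~ free_fun b') ->
  forall g, S g -> in_span b g.
Proof.
move=> Sb free_b maxD g Sg.
pose b' i := if unlift ord_max i is Some j then b j else g.
have b'_lift j : b' (widen_ord (leqnSn D) j) = b j.
  by rewrite /b' widen_ord_max liftK.
have b'_max : b' ord_max = g by rewrite /b' unlift_none.
have [c c_rel [i ci]] : exists2 c : 'I_D.+1 -> R,
    (forall x, \sum_(i < D.+1) c i * b' i x = 0) & exists i, c i <> 0.
  apply: boolp.contrapT => no_rel; apply: (maxD b') => [i|c c_rel i].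
    by rewrite /b'; case: unlift.
  by apply: boolp.contrapT => ci; apply: no_rel; exists c => //; exists i.
pose cw j := c (widen_ord (leqnSn D) j).
have rel x : \sum_(j < D) cw j * b j x + c ord_max * g x = 0.
  rewrite -[RHS](c_rel x) big_ord_recr /= b'_max; congr (_ + _).
  by apply: eq_bigr => j _; rewrite b'_lift.
have cmax : c ord_max != 0.
  apply/eqP => cmax0; apply: ci.
  have cw0 : forall j, cw j = 0.
    by apply: free_b => x; rewrite -[RHS](rel x) cmax0 mul0r addr0.
  by case: (unliftP ord_max i) => [j ->|-> //]; rewrite -widen_ord_max; exact: cw0.
exists (fun j => - cw j / c ord_max) => x.
apply: (mulfI cmax); rewrite big_distrr /=.
have := rel x; rewrite addrC => /eqP; rewrite addr_eq0 => /eqP ->.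
rewrite -sumrN; apply: eq_bigr => j _.
by rewrite mulrA [c ord_max * _]mulrCA mulfV // mulr1 mulNr.
Qed.

End FunctionFamilies.

Lemma has_dim_of_span (R : realType) (T : Type) (S : set (T -> R))
    N (e : 'I_N -> T -> R) :
  (forall g, S g -> in_span e g) ->
  exists D, has_dim S D /\
    forall k (b : 'I_k -> T -> R), (forall i, S (b i)) -> free_fun b -> (k <= D)%N.
Proof.
move=> spanS.
pose P k := `[< exists b : 'I_k -> T -> R, (forall i, S (b i)) /\ free_fun b >].
have P0 : P 0%N by apply/asboolP; exists (fun _ _ => 0); split => [[]|c _ []].
have P_le k : P k -> (k <= N)%N.
  move=> /asboolP[b [Sb free_b]].
  by apply: free_fun_leq_span free_b => i; exact/spanS/Sb.
have [D /asboolP[b [Sb free_b]] maxD] := ex_maxnP (ex_intro _ 0%N P0) P_le.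
exists D; split => [|k b' Sb' free_b']; last by apply: maxD; apply/asboolP; exists b'.
exists b; split => //; apply: maximal_free_spans => // b' Sb' free_b'.
by have := maxD D.+1 (asboolT (ex_intro _ b' (conj Sb' free_b'))); rewrite ltnn.
Qed.

Lemma comb_eq0_of_size_decr (R : idomainType) n (ps : nat -> {poly R}) :
  (forall k, (k <= n)%N -> size (ps k) = (n.+1 - k)%N) ->
  forall c : 'I_n.+1 -> R, \sum_(k < n.+1) c k *: ps k = 0 -> forall k, c k = 0.
Proof.
move=> size_ps c comb0.
(* Compare coefficients of degree n - k: there ps j vanishes for j > k, and
   c j = 0 for j < k by induction. *)
suff c0 m (k : 'I_n.+1) : (k < m)%N -> c k = 0 by move=> k; apply: (c0 k.+1).
elim: m k => [|m IHm] k //; rewrite ltnS leq_eqVlt => /orP[/eqP km|]; last exact: IHm.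
have := congr1 (fun q : {poly R} => q`_(n - k)) comb0.
rewrite coef_sum coef0 (bigD1 k) //= big1 ?addr0.
  rewrite coefZ => /eqP; rewrite mulf_eq0 => /orP[/eqP //|].
  have size_k : size (ps k) = (n - k).+1 by rewrite size_ps ?subSn // -ltnS.
  have : lead_coef (ps k) != 0 by rewrite lead_coef_eq0 -size_poly_eq0 size_k.
  by rewrite lead_coefE size_k => /negPf ->.
move=> j jk; rewrite coefZ.
case: (ltngtP j k) => [ltjk|ltkj|/val_inj eqjk]; last by rewrite eqjk eqxx in jk.
  by rewrite IHm ?mul0r // -km.
rewrite nth_default ?mulr0 // (size_ps j (ltn_ord j)).
by have := ltn_ord j; have := ltn_ord k; lia.
Qed.

Section FiniteDifference.
Variable R : numDomainType.
Implicit Types p q : {poly R}.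

Lemma eq_poly_horner p q : (forall x, p.[x] = q.[x]) -> p = q.
Proof.
move=> eq_pq; apply/eqP; rewrite -subr_eq0; apply/negP => /negP pq_neq0.
pose rs := [seq (i%:R : R) | i <- iota 0 (size (p - q))].
have rs_roots : all (root (p - q)) rs.
  by apply/allP => x _; rewrite rootE hornerD hornerN eq_pq subrr.
have rs_uniq : uniq rs.
  by rewrite map_inj_uniq ?iota_uniq // => i j /eqP; rewrite eqr_nat => /eqP.
by have := max_poly_roots pq_neq0 rs_roots rs_uniq; rewrite size_map size_iota ltnn.
Qed.

(* The forward difference p(X + 1) - p(X), written as its Taylor expansion
   so that its coefficients are explicit. *)
Definition fdiff p := \sum_(1 <= i < size p) p^`N(i).

Lemma horner_fdiff p x : (fdiff p).[x] = p.[x + 1] - p.[x].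
Proof.
rewrite (nderiv_taylor _ (commr1 x)) /fdiff horner_sum.
under [X in _ = X - _]eq_bigr do rewrite expr1n mulr1.
have [->|p_neq0] := eqVneq p 0.
  by rewrite size_poly0 !big_geq // ?big_ord0 horner0 subrr.
rewrite -(big_mkord xpredT (fun i => p^`N(i).[x])) big_ltn ?size_poly_gt0 //.
by rewrite nderivn0 addrC addKr.
Qed.

Lemma coef_fdiff p j :
  (fdiff p)`_j = \sum_(1 <= i < size p) p`_(i + j) *+ 'C(i + j, i).
Proof. by rewrite /fdiff coef_sum; apply: eq_bigr => i _; rewrite coef_nderivn. Qed.

Lemma size_fdiff p : size (fdiff p) = (size p).-1.
Proof.
case size_p: (size p) => [|[|m]] /=; try by rewrite /fdiff size_p big_geq ?size_poly0.
apply/eqP; rewrite eqn_leq; apply/andP; split.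
  apply/leq_sizeP => j le_mj; rewrite coef_fdiff big1_seq // => i /andP[_].
  rewrite mem_iota => /andP[i_gt0 _]; rewrite nth_default ?mul0rn // size_p.
  by rewrite -add1n leq_add.
suff : (fdiff p)`_m != 0.
  by apply: contraR; rewrite -leqNgt => /leq_sizeP ->.
rewrite coef_fdiff size_p big_ltn // big1_seq ?addr0.
  rewrite add1n bin1 mulrn_eq0 negb_or /=.
  by have := lead_coef_eq0 p; rewrite lead_coefE size_p -size_poly_eq0 size_p /= => ->.
move=> i /andP[_]; rewrite mem_iota => /andP[i_gt1 _].
by rewrite nth_default ?mul0rn // size_p -[m.+2]addn2 addnC leq_add.
Qed.

Lemma size_iter_fdiff k p : size (iter k fdiff p) = (size p - k)%N.
Proof. by elim: k => [|k IHk]; rewrite ?subn0 //= size_fdiff IHk subnS. Qed.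

End FiniteDifference.
Arguments fdiff {R}.

Section MPolySize.
Variables (R : idomainType) (n : nat).
Implicit Types p q : mpoly.mpoly n R.

Lemma msizeM_le_pred p q : (msize (p * q) <= (msize p + msize q).-1)%N.
Proof.
have [->|p_neq0] := eqVneq p 0; first by rewrite mul0r mpoly.msize0.
have [->|q_neq0] := eqVneq q 0; first by rewrite mulr0 mpoly.msize0.
by rewrite mpoly.msizeM.
Qed.

Lemma msize_prod_exp_le k (q : 'I_k -> mpoly.mpoly n R) (e : 'I_k -> nat) :
  (forall i, msize (q i) <= 2)%N ->
  (msize (\prod_(i < k) q i ^+ e i) <= (\sum_(i < k) e i).+1)%N.
Proof.
move=> size_q.
have size_exp i m : (msize (q i ^+ m) <= m.+1)%N.
  elim: m => [|m IHm]; first by rewrite expr0 mpoly.msize1.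
  by rewrite exprS (leq_trans (msizeM_le_pred _ _)) //; have := size_q i; lia.
apply: (big_rec2 (fun a p => msize p <= a.+1)%N); first by rewrite mpoly.msize1.
move=> i a p _ size_p; rewrite (leq_trans (msizeM_le_pred _ _)) //.
by have := size_exp i (e i); lia.
Qed.

Lemma msize_comp_mpoly_le k (p : mpoly.mpoly k R) (lq : k.-tuple (mpoly.mpoly n R)) :
  (forall i, msize (tnth lq i) <= 2)%N ->
  (msize (mpoly.comp_mpoly lq p) <= msize p)%N.
Proof.
move=> size_lq; rewrite mpoly.comp_mpolyEX.
apply: leq_trans (mpoly.msize_sum _ _ _) _; apply/bigmax_leqP_seq => m m_supp _.
apply: leq_trans (mpoly.msizeZ_le _ _) _; rewrite mpoly.comp_mpolyX.
apply: leq_trans (msize_prod_exp_le _ size_lq) _.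
by rewrite -mpoly.mdegE; apply: mpoly.msize_mdeg_lt.
Qed.

Lemma msize_mpolyX1 (i : 'I_n) : msize (mpoly.mpolyX R (mpoly.mnm1 i)) = 2%N.
Proof. by rewrite mpoly.msizeX mpoly.mdeg1. Qed.

End MPolySize.

Lemma mcoeff_sum_msuppX (R : ringType) n k (p : mpoly.mpoly n R)
    (P : pred (mpoly.multinom n)) (phi : mpoly.multinom n -> mpoly.multinom k) m0 :
  m0 \in msupp p -> P m0 ->
  {in msupp p, forall m, P m -> phi m = phi m0 -> m = m0} ->
  mcoeff (phi m0) (\sum_(m <- msupp p | P m) mcoeff m p *: mpoly.mpolyX R (phi m))
  = mcoeff m0 p.
Proof.
move=> m0_supp P_m0 phi_inj; rewrite raddf_sum /= big_mkcond.
rewrite (bigD1_seq m0) ?mpoly.msupp_uniq //= P_m0.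
rewrite mpoly.mcoeffZ mpoly.mcoeffX eqxx mulr1 big1_seq ?addr0 // => m /andP[ne_m m_supp].
case: ifP => // P_m; rewrite mpoly.mcoeffZ mpoly.mcoeffX.
by case: eqP => [/(phi_inj m m_supp P_m)/eqP|]; rewrite ?(negbTE ne_m) ?mulr0.
Qed.

Section PolyFun.
Variables (R : realType) (d : nat).
Implicit Types p : mpoly.mpoly d R.

Lemma polyfunE p x :
  polyfun p x = \sum_(m <- msupp p) mcoeff m p * \prod_i (x i ord0) ^+ m i.
Proof. exact: mpoly.mevalE. Qed.

Lemma continuous_polyfun p : continuous (polyfun p).
Proof.
have -> : polyfun p = fun x =>
    \sum_(m <- msupp p) mcoeff m p * \prod_i (x i ord0) ^+ m i.
  by apply: funext => x; rewrite polyfunE.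
apply: (continuous_big add_continuous) => m _ x.
apply: continuousM; first exact: cst_continuous.
apply: (continuous_big mul_continuous) => i _ {}x.
apply: (@continuous_comp _ _ _ (fun y : 'cV[R]_d => y i ord0) (fun t => t ^+ m i)).
  exact: coord_continuous.
exact: exprn_continuous.
Qed.

Definition shift_vars (h : 'cV[R]_d) : d.-tuple (mpoly.mpoly d R) :=
  [tuple mpoly.mpolyX R (mpoly.mnm1 i) + mpoly.mpolyC d (h i ord0) | i < d].

Definition linear_vars (P : 'M[R]_d) : d.-tuple (mpoly.mpoly d R) :=
  [tuple \sum_(j < d) P i j *: mpoly.mpolyX R (mpoly.mnm1 j) | i < d].

Lemma polyfun_shift p h x :
  polyfun p (x + h) = polyfun (mpoly.comp_mpoly (shift_vars h) p) x.
Proof.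
rewrite /polyfun mpoly.comp_mpoly_meval; apply: mpoly.meval_eq => i.
by rewrite tnth_mktuple mpoly.mevalD mpoly.mevalXU mpoly.mevalC !mxE.
Qed.

Lemma polyfun_linear p P x :
  polyfun p (P *m x) = polyfun (mpoly.comp_mpoly (linear_vars P) p) x.
Proof.
rewrite /polyfun mpoly.comp_mpoly_meval; apply: mpoly.meval_eq => i.
rewrite tnth_mktuple mxE raddf_sum /=; apply: eq_bigr => j _.
by rewrite mpoly.mevalZ mpoly.mevalXU.
Qed.

Lemma msize_shift_vars h i : (msize (tnth (shift_vars h) i) <= 2)%N.
Proof.
rewrite tnth_mktuple; apply: leq_trans (mpoly.msizeD_le _ _) _.
by rewrite geq_max msize_mpolyX1 mpoly.msizeC; case: (_ != 0).
Qed.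

Lemma msize_linear_vars P i : (msize (tnth (linear_vars P) i) <= 2)%N.
Proof.
rewrite tnth_mktuple; apply: leq_trans (mpoly.msize_sum _ _ _) _.
apply/bigmax_leqP_seq => j _ _; apply: leq_trans (mpoly.msizeZ_le _ _) _.
by rewrite msize_mpolyX1.
Qed.

End PolyFun.

Section PolyFunDegLe.
Variables (R : realType) (d : nat).
Local Open Scope classical_set_scope.

Definition polyfun_deg_le n := [set g : 'cV[R]_d -> R |
  exists p : mpoly.mpoly d R, (msize p <= n.+1)%N /\ g = polyfun p].

Lemma polyfun_deg_le_subspace n : is_subspace_C (polyfun_deg_le n).
Proof.
split.
- by move=> g [p [_ ->]]; exact: continuous_polyfun.
- exists 0; split; first by rewrite mpoly.msize0.
  by apply: funext => x; rewrite /polyfun mpoly.meval0.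
- move=> g1 g2 [p [size_p ->]] [q [size_q ->]]; exists (p + q); split.
    by apply: leq_trans (mpoly.msizeD_le _ _) _; rewrite geq_max size_p size_q.
  by apply: funext => x; rewrite /polyfun mpoly.mevalD.
- move=> a g [p [size_p ->]]; exists (a *: p); split.
    exact: leq_trans (mpoly.msizeZ_le _ _) size_p.
  by apply: funext => x; rewrite /polyfun mpoly.mevalZ.
Qed.

Lemma polyfun_deg_le_tau n h g : polyfun_deg_le n g -> polyfun_deg_le n (tau h g).
Proof.
move=> [p [size_p ->]]; exists (mpoly.comp_mpoly (shift_vars h) p); split.
  exact: leq_trans (msize_comp_mpoly_le _ (msize_shift_vars h)) size_p.
by apply: funext => x; rewrite /tau polyfun_shift.
Qed.

Lemma polyfun_deg_le_Op n P g : polyfun_deg_le n g -> polyfun_deg_le n (Op P g).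
Proof.
move=> [p [size_p ->]]; exists (mpoly.comp_mpoly (linear_vars P) p); split.
  exact: leq_trans (msize_comp_mpoly_le _ (msize_linear_vars P)) size_p.
by apply: funext => x; rewrite /Op polyfun_linear.
Qed.

(* Exponent vectors are indexed by all of 'I_n.+1 ^ d rather than by the
   multi-indices of degree at most n: this box has (n+1)^d elements. *)
Definition box_monomial n (j : 'I_#|{ffun 'I_d -> 'I_n.+1}|) (x : 'cV[R]_d) : R :=
  \prod_i (x i ord0) ^+ enum_val j i.

Lemma polyfun_deg_le_span n g :
  polyfun_deg_le n g -> in_span (@box_monomial n) g.
Proof.
move=> [p [size_p ->]].
pose expo (m : mpoly.multinom d) : {ffun 'I_d -> 'I_n.+1} := [ffun i => inord (m i)].
exists (fun j => \sum_(m <- msupp p | expo m == enum_val j) mcoeff m p) => x.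
rewrite polyfunE.
under [RHS]eq_bigr do rewrite big_distrl big_mkcond /=.
rewrite exchange_big /= [LHS]big_seq [RHS]big_seq; apply: eq_bigr => m m_supp.
rewrite (bigD1 (enum_rank (expo m))) //= enum_rankK eqxx.
rewrite [X in _ = _ + X]big1 ?addr0; last first.
  move=> j ne_j; case: eqP => // expo_m.
  by rewrite expo_m enum_valK eqxx in ne_j.
congr (_ * _); apply: eq_bigr => i _; congr (_ ^+ _).
rewrite enum_rankK ffunE inordK //.
have := mpoly.msize_mdeg_lt m_supp.
have : (m i <= mdeg m)%N by rewrite mpoly.mdegE (bigD1 i) //= leq_addr.
lia.
Qed.

End PolyFunDegLe.

Section RGClosure.
Variables (R : realType) (d : nat) (G : set 'M[R]_d).
Implicit Types g : 'cV[R]_d -> R.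

Lemma RG_self g : RG G g g.
Proof. by rewrite /RG /= => S _ Sg. Qed.

Lemma RG_tau g0 g h : RG G g0 g -> RG G g0 (tau h g).
Proof. by rewrite /RG /= => RGg S subS Sg0 S_tau S_Op; exact/S_tau/(RGg S). Qed.

Lemma RG_add g0 g1 g2 :
  RG G g0 g1 -> RG G g0 g2 -> RG G g0 (fun x => g1 x + g2 x).
Proof.
rewrite /RG /= => RGg1 RGg2 S subS Sg0 S_tau S_Op; have [_ _ S_add _] := subS.
by apply: S_add; [apply: RGg1 | apply: RGg2].
Qed.

Lemma RG_scale g0 g a : RG G g0 g -> RG G g0 (fun x => a * g x).
Proof.
rewrite /RG /= => RGg S subS Sg0 S_tau S_Op; have [_ _ _ S_scale] := subS.
by apply: S_scale; apply: RGg.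
Qed.

Lemma RG_sub_polyfun_deg_le (f : mpoly.mpoly d R) n : (msize f <= n.+1)%N ->
  (RG G (polyfun f) `<=` polyfun_deg_le n)%classic.
Proof.
move=> size_f g RGg; apply: RGg.
- exact: polyfun_deg_le_subspace.
- by exists f.
- by move=> h g'; exact: polyfun_deg_le_tau.
- by move=> P g' _; exact: polyfun_deg_le_Op.
Qed.

End RGClosure.

Section NonVanishing.
Variable R : numDomainType.

Lemma exists_horner_neq0 (r : {poly R}) : r != 0 -> exists t, r.[t] != 0.
Proof.
move=> r_neq0; apply: boolp.contrapT => /boolp.forallNP r_roots.
move/eqP: r_neq0; apply; apply: eq_poly_horner => t; rewrite horner0.
by apply/eqP/negPn/negP/r_roots.
Qed.

Definition mnm_droplast n (m : mpoly.multinom n.+1) : mpoly.multinom n :=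
  mpoly.Multinom [tuple m (widen_ord (leqnSn n) i) | i < n].

Lemma mnm_droplastE n (m : mpoly.multinom n.+1) j :
  mnm_droplast m j = m (widen_ord (leqnSn n) j).
Proof. exact: mpoly.mnmE. Qed.

Definition mcoeff_last n (p : mpoly.mpoly n.+1 R) k : mpoly.mpoly n R :=
  \sum_(m <- msupp p | m ord_max == k) mcoeff m p *: mpoly.mpolyX R (mnm_droplast m).

Lemma mcoeff_last_lead_neq0 n (p : mpoly.mpoly n.+1 R) :
  p != 0 -> mcoeff_last p (mpoly.mlead p ord_max) != 0.
Proof.
move=> p_neq0; apply: contra_neq (p_neq0) => lead0.
apply/eqP; rewrite -mpoly.mleadc_eq0.
rewrite -(mcoeff_sum_msuppX (P := fun m => m ord_max == mpoly.mlead p ord_max)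
  (phi := @mnm_droplast n)) ?mpoly.mlead_supp //.
  by rewrite [X in mcoeff _ X]lead0 mpoly.mcoeff0.
move=> m _ /eqP m_last eq_drop; apply/mpoly.mnmP => i.
have [j ->|->] := unliftP ord_max i; last by rewrite m_last.
by rewrite -widen_ord_max -!mnm_droplastE eq_drop.
Qed.

Definition mslice_last n (w : 'I_n -> R) (p : mpoly.mpoly n.+1 R) : {poly R} :=
  \sum_(m <- msupp p)
    (mcoeff m p * \prod_(j < n) w j ^+ m (widen_ord (leqnSn n) j)) *: 'X^(m ord_max).

Lemma horner_mslice_last n (w : 'I_n -> R) p t :
  (mslice_last w p).[t] =
  meval (fun i => if unlift ord_max i is Some j then w j else t) p.
Proof.
rewrite mpoly.mevalE horner_sum; apply: eq_bigr => m _.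
rewrite hornerZ hornerXn big_ord_recr /= unlift_none -mulrA; congr (_ * (_ * _)).
by apply: eq_bigr => j _; rewrite widen_ord_max liftK.
Qed.

Lemma coef_mslice_last n (w : 'I_n -> R) p k :
  (mslice_last w p)`_k = meval w (mcoeff_last p k).
Proof.
rewrite coef_sum raddf_sum /= [RHS]big_mkcond; apply: eq_bigr => m _.
rewrite coefZ coefXn eq_sym; case: eqP => _; last by rewrite mulr0.
rewrite mulr1 mpoly.mevalZ mpoly.mevalX; congr (_ * _).
by apply: eq_bigr => j _; rewrite mnm_droplastE.
Qed.

Lemma mpoly_nonvanishing n (p : mpoly.mpoly n R) :
  p != 0 -> exists v : 'I_n -> R, meval v p != 0.
Proof.
elim: n p => [|n IHn] p p_neq0.
  have size_p : (msize p <= 1)%N.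
    rewrite mpoly.msizeE; apply/bigmax_leqP_seq => m _ _.
    by rewrite mpoly.mdegE big_ord0.
  exists (fun _ => 0); rewrite (mpoly.msize1_polyC size_p) mpoly.mevalC.
  by apply: contra_neq p_neq0 => p0; rewrite (mpoly.msize1_polyC size_p) p0.
have [w qw_neq0] := IHn _ (mcoeff_last_lead_neq0 p_neq0).
have [t slice_t] : exists t, (mslice_last w p).[t] != 0.
  apply: exists_horner_neq0; apply: contra_neq qw_neq0 => slice0.
  by rewrite -coef_mslice_last slice0 coef0.
by exists (fun i => if unlift ord_max i is Some j then w j else t); rewrite -horner_mslice_last.
Qed.

End NonVanishing.

Section LowerBound.
Variables (R : realType) (d : nat) (G : set 'M[R]_d) (f : mpoly.mpoly d R) (n : nat).
Hypothesis size_f : msize f = n.+1.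

Definition mtop := \sum_(m <- msupp f | mdeg m == n) mcoeff m f *: mpoly.mpolyX R m.

Lemma mtop_neq0 : mtop != 0.
Proof.
have f_neq0 : f != 0 by rewrite -mpoly.msize_poly_eq0 size_f.
have deg_lead : mdeg (mpoly.mlead f) = n.
  by have := mpoly.mlead_deg f_neq0; rewrite size_f => -[].
apply: contra_neq (f_neq0) => top0; apply/eqP; rewrite -mpoly.mleadc_eq0.
rewrite -(mcoeff_sum_msuppX (P := fun m => mdeg m == n) (phi := id))
  ?mpoly.mlead_supp ?deg_lead //.
by rewrite [X in mcoeff _ X]top0 mpoly.mcoeff0.
Qed.

Variable v : 'I_d -> R.
Hypothesis mtop_v : meval v mtop != 0.

Definition vcol : 'cV[R]_d := \col_i v i.

Definition line_poly : {poly R} :=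
  \sum_(m <- msupp f) (mcoeff m f * \prod_i v i ^+ m i) *: 'X^(mdeg m).

Lemma horner_line_poly s : line_poly.[s] = polyfun f (s *: vcol).
Proof.
rewrite horner_sum polyfunE; apply: eq_bigr => m _.
rewrite hornerZ hornerXn -mulrA; congr (_ * _).
rewrite mpoly.mdegE -prodrXr -big_split /=; apply: eq_bigr => i _.
by rewrite !mxE exprMn mulrC.
Qed.

Lemma size_line_poly : size line_poly = n.+1.
Proof.
apply/eqP; rewrite eqn_leq; apply/andP; split.
  apply/leq_sizeP => j lt_nj; rewrite coef_sum big1_seq // => m /andP[_ m_supp].
  rewrite coefZ coefXn; case: eqP => [deg_m|]; last by rewrite mulr0.
  by have := mpoly.msize_mdeg_lt m_supp; rewrite size_f -deg_m; lia.
suff : line_poly`_n != 0 by apply: contraR; rewrite -leqNgt => /leq_sizeP ->.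
apply: contra_neq mtop_v => line0; rewrite -[RHS]line0 coef_sum raddf_sum /= big_mkcond.
apply: eq_bigr => m _; rewrite coefZ coefXn eq_sym mpoly.mevalZ mpoly.mevalX.
by case: eqP => _; rewrite ?mulr1 ?mulr0.
Qed.

(* Iterated forward differences of [polyfun f] in the direction [vcol],
   written in the shape in which R_G(f) is closed. *)
Fixpoint diff_iter (k : nat) : 'cV[R]_d -> R :=
  if k is k.+1 then fun x => tau vcol (diff_iter k) x + (-1) * diff_iter k x
  else polyfun f.

Lemma RG_diff_iter k : RG G (polyfun f) (diff_iter k).
Proof.
elim: k => [|k IHk] /=; first exact: RG_self.
by apply: RG_add; [apply: RG_tau | apply: RG_scale].
Qed.

Lemma diff_iter_line k s : diff_iter k (s *: vcol) = (iter k fdiff line_poly).[s].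
Proof.
elim: k s => [|k IHk] s /=; first by rewrite horner_line_poly.
by rewrite horner_fdiff -!IHk /tau mulN1r scalerDl scale1r.
Qed.

Lemma free_diff_iter : free_fun (fun k : 'I_n.+1 => diff_iter k).
Proof.
move=> c comb0; apply: (comb_eq0_of_size_decr (ps := fun k => iter k fdiff line_poly)).
  by move=> k _; rewrite size_iter_fdiff size_line_poly.
apply: eq_poly_horner => s; rewrite horner0 horner_sum -[RHS](comb0 (s *: vcol)).
by apply: eq_bigr => k _; rewrite hornerZ diff_iter_line.
Qed.

End LowerBound.

Theorem mainTheorem8 (R : realType) (d : nat) (G : set 'M[R]_d)
    (f : mpoly.mpoly d R) (n : nat) :
  (0 < d)%N -> is_GL_subgroup G -> f != 0 -> mpoly.msize f = n.+1 ->
  exists D : nat,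
    [/\ has_dim (RG G (polyfun f)) D,
        (D%:R `^ (d%:R)^-1 - 1 <= n%:R :> R),
        (n%:R <= D%:R - 1 :> R) &
        (D = 'C(n + d, d) ->
           n%:R <= ((d`!)%:R * D%:R) `^ (d%:R)^-1 - 1 :> R)].
Proof.
(* Neither bound uses that G is a group. *)
move=> d_gt0 _ _ size_f.
have RG_span g : RG G (polyfun f) g -> in_span (@box_monomial R d n) g.
  move=> RGg; apply: polyfun_deg_le_span.
  exact: (RG_sub_polyfun_deg_le (eq_leq size_f) RGg).
have [D [dimD maxD]] := has_dim_of_span RG_span.
have le_nD : (n.+1 <= D)%N.
  have [v mtop_v] := mpoly_nonvanishing (mtop_neq0 size_f).
  by apply: maxD (free_diff_iter size_f mtop_v) => k; exact: RG_diff_iter.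
have le_D_box : (D <= n.+1 ^ d)%N.
  have [b [Sb free_b _]] := dimD.
  have -> : (n.+1 ^ d = #|{ffun 'I_d -> 'I_n.+1}|)%N by rewrite card_ffun !card_ord.
  by apply: free_fun_leq_span free_b => i; exact: RG_span (Sb i).
exists D; split => //.
- rewrite lerBlDr; apply: powR_inv_le => //.
  by rewrite natr1 -natrX ler_nat.
- by rewrite lerBrDr natr1 ler_nat.
- move=> DC; rewrite lerBrDr; apply: le_powR_inv => //.
  by rewrite natr1 -natrX -natrM ler_nat DC expn_le_fact_bin.
Qed.
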